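(* Let $R$ be a Dedekind domain with $\operatorname{char}(R)\neq3$ and fraction field $K$, and $\mathfrak a$ a fractional ideal of $R$. Let $f\in V_{\mathfrak a}$ with $\operatorname{disc}(f)\ne0$, and let $(S,I,\delta,s)$ be an $\mathfrak a$-balanced quadruple whose image under $\Phi_{\mathfrak a}$ is the $\mathrm{SL}(R\oplus\mathfrak a)$-orbit of $f$. Then $f$ has a zero $(x_0,y_0)\in K^2\setminus\{(0,0)\}$ if and only if $\delta=\gamma^3$ for some $\gamma\in(S\otimes_RK)^\times$.
   Context: $V_{\mathfrak a}=\{ax^3+3bx^2y+3cxy^2+dy^3: a\in\mathfrak a,b\in R,c\in\mathfrak a^{-1},d\in\mathfrak a^{-2}\}$, $\operatorname{disc}(f)=-3b^2c^2+4ac^3+4b^3d+a^2d^2-6abcd$; $\mathrm{SL}(R\oplus\mathfrak a)$ is the group of determinant-one matrices $\begin{pmatrix} r&x\\ y&s\end{pmatrix}$ with $r,s\in R$, $x\in\mathfrak a$, $y\in\mathfrak a^{-1}$, acting by $(g\cdot f)(x,y)=\det(g)^{-1}f((x,y)g)$. A quadratic $R$-algebra is a commutative $R$-algebra that is a rank-2 finitely generated torsion-free $R$-module; $N=N_{S\otimes K/K}$. An $\mathfrak a$-orientation is an isomorphism $\pi:\bigwedge^2S\to\mathfrak a$, equivalently a $\xi$ with $S=R+\mathfrak a\xi$ and $\pi_K(1\wedge\xi)=1$. An $\mathfrak a$-balanced quadruple: $S$ a nondegenerate (nonzero discriminant) $\mathfrak a$-oriented quadratic $R$-algebra, $I$ a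 fractional ideal of $S$, $\delta\in(S\otimes K)^\times$, $s\in K^\times$, with $I^3\subset\delta S$, $[S:I]_R=sR$ (module index) and $s^3=N(\delta)$. $\Phi_{\mathfrak a}(S,I,\delta,s)$ is the orbit of $C(x,y)=\pi_K(1\wedge(\alpha x+\beta y)^3\delta^{-1})$ for any decomposition $I=R\alpha+\mathfrak a\beta$ with $\pi_K(\alpha\wedge\beta)=s$. *)

From HB Require Import structures.
From mathcomp Require Import all_boot all_order all_algebra.
From mathcomp Require Import mpoly.
Set Implicit Arguments. Unset Strict Implicit. Unset Printing Implicit Defensive.
Import Order.TTheory GRing.Theory Num.Theory.
Local Open Scope ring_scope.

Section Defs.
Variable K : fieldType.
(* The Dedekind domain R is given as a subring of its fraction field K. *)
Variable R : K -> Prop.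

Definition is_subring : Prop :=
  [/\ R 0, R 1, (forall x y, R x -> R y -> R (x - y)) &
      (forall x y, R x -> R y -> R (x * y))].

Definition is_fraction_field : Prop :=
  forall x : K, exists a b, [/\ R a, R b, b != 0 & x = a / b].

Definition Rspan (X : K -> Prop) (z : K) : Prop :=
  exists (m : nat) (r x : 'I_m -> K),
    (forall i, R (r i) /\ X (x i)) /\ z = \sum_(i < m) r i * x i.

Definition is_ideal (J : K -> Prop) : Prop :=
  [/\ (forall x, J x -> R x), J 0, (forall x y, J x -> J y -> J (x + y)) &
      (forall r x, R r -> J x -> J (r * x))].

Definition is_noetherian : Prop :=
  forall J, is_ideal J ->
    exists (m : nat) (g : 'I_m -> K), (forall i, J (g i)) /\
      (forall z, J z <-> Rspan (fun y => exists i, y = g i) z).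

Definition integrally_closed : Prop :=
  forall (x : K) (p : {poly K}), p \is monic -> (forall i, R p`_i) ->
    root p x -> R x.

Definition is_prime_ideal (J : K -> Prop) : Prop :=
  is_ideal J /\ ~ J 1 /\ (forall x y, R x -> R y -> J (x * y) -> J x \/ J y).

Definition dim_le1 : Prop :=
  forall J, is_prime_ideal J -> (exists x, J x /\ x != 0) ->
    forall J', is_ideal J' -> (forall x, J x -> J' x) ->
      (forall x, J' x <-> J x) \/ J' 1.

Definition dedekind : Prop :=
  [/\ is_subring, is_fraction_field, is_noetherian, integrally_closed & dim_le1].

Definition frac_ideal (a : K -> Prop) : Prop :=
  [/\ (exists x, a x /\ x != 0), a 0,
      (forall x y, a x -> a y -> a (x + y)),
      (forall r x, R r -> a x -> a (r * x)) &
      (exists d, [/\ R d, d != 0 & forall x, a x -> R (d * x)])].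

(* a^{-1} and a^{-2} = (a^2)^{-1}. *)
Definition finv (a : K -> Prop) (x : K) : Prop := forall y, a y -> R (x * y).
Definition finv2 (a : K -> Prop) (x : K) : Prop :=
  forall y z, a y -> a z -> R (x * y * z).

Definition bform (e0 e1 e2 e3 : K) : {mpoly K[2]} :=
  e0 *: 'X_0 ^+ 3 + e1 *: ('X_0 ^+ 2 * 'X_1) + e2 *: ('X_0 * 'X_1 ^+ 2)
  + e3 *: 'X_1 ^+ 3.

Definition cubic (a b c d : K) : {mpoly K[2]} := bform a (3 * b) (3 * c) d.

Definition in_V (aa : K -> Prop) (a b c d : K) : Prop :=
  [/\ aa a, R b, finv aa c & finv2 aa d].

Definition disc (a b c d : K) : K :=
  - 3 * b ^+ 2 * c ^+ 2 + 4 * a * c ^+ 3 + 4 * b ^+ 3 * d + a ^+ 2 * d ^+ 2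
  - 6 * a * b * c * d.

Definition in_SL (aa : K -> Prop) (g : 'M[K]_2) : Prop :=
  [/\ R (g 0 0), aa (g 0 1), finv aa (g 1 0), R (g 1 1) & \det g = 1].

Definition act (g : 'M[K]_2) (f : {mpoly K[2]}) : {mpoly K[2]} :=
  (\det g)^-1 *: (f \mPo [tuple g 0 0 *: 'X_0 + g 1 0 *: 'X_1;
                                g 0 1 *: 'X_0 + g 1 1 *: 'X_1]).

Definition has_nontrivial_zero (f : {mpoly K[2]}) : Prop :=
  exists x0 y0 : K, (x0 != 0 \/ y0 != 0) /\
    meval (fun i : 'I_2 => if i == ord0 then x0 else y0) f = 0.

(* An a-oriented quadratic R-algebra is S = R + a xi, with xi^2 = t xi - n,
   t in a^{-1}, n in a^{-2}; the orientation is pi_K(1 /\ xi) = 1.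
   Elements of S (x) K are pairs (u, v) standing for u + v xi. *)
Definition qalg (aa : K -> Prop) (t n : K) : Prop := finv aa t /\ finv2 aa n.
Definition qdisc (t n : K) : K := t ^+ 2 - 4 * n.

Section QA.
Variables t n : K.
Definition qmul (p q : K * K) : K * K :=
  (p.1 * q.1 - n * p.2 * q.2, p.1 * q.2 + p.2 * q.1 + t * p.2 * q.2).
Definition qnorm (p : K * K) : K := p.1 ^+ 2 + t * p.1 * p.2 + n * p.2 ^+ 2.
Definition qconj (p : K * K) : K * K := (p.1 + t * p.2, - p.2).
Definition qinv (p : K * K) : K * K :=
  ((qconj p).1 / qnorm p, (qconj p).2 / qnorm p).
Definition qunit (p : K * K) : Prop := qnorm p != 0.
Definition qcube (p : K * K) : K * K := qmul p (qmul p p).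
(* the orientation  pi_K : /\^2 (S (x) K) -> K *)
Definition qwedge (p q : K * K) : K := p.1 * q.2 - p.2 * q.1.
Definition qadd (p q : K * K) : K * K := (p.1 + q.1, p.2 + q.2).
Definition qscale (k : K) (p : K * K) : K * K := (k * p.1, k * p.2).
End QA.

Definition inS (aa : K -> Prop) (p : K * K) : Prop := R p.1 /\ aa p.2.

Definition frac_ideal_S (aa : K -> Prop) (t n : K) (I : K * K -> Prop) : Prop :=
  [/\ I (0, 0), (forall p q, I p -> I q -> I (qadd p q)),
      (forall s p, inS aa s -> I p -> I (qmul t n s p)),
      (exists k, k != 0 /\ forall p, inS aa p -> I (qscale k p)) &
      (exists k, k != 0 /\ forall p, I p -> inS aa (qscale k p))].

(* apply a K-linear endomorphism of S (x) K, given by its matrix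
   in the basis (1, xi) *)
Definition mapply (M : 'M[K]_2) (p : K * K) : K * K :=
  (M 0 0 * p.1 + M 0 1 * p.2, M 1 0 * p.1 + M 1 1 * p.2).

(* module index [S : I]_R : the R-module generated by the determinants of
   the K-linear maps sending S into I *)
Definition module_index (aa : K -> Prop) (I : K * K -> Prop) (z : K) : Prop :=
  Rspan (fun d => exists M : 'M[K]_2,
            (forall p, inS aa p -> I (mapply M p)) /\ d = \det M) z.

Definition balanced (aa : K -> Prop) (t n : K) (I : K * K -> Prop)
    (delta : K * K) (s : K) : Prop :=
  [/\ qalg aa t n, qdisc t n != 0, frac_ideal_S aa t n I,
      qunit t n delta & s != 0] /\
  [/\
      (forall x y z, I x -> I y -> I z ->
          exists sg, inS aa sg /\ qmul t n x (qmul t n y z) = qmul t n delta sg),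
      (forall z, module_index aa I z <-> exists r, R r /\ z = s * r) &
      s ^+ 3 = qnorm t n delta].

(* C(x,y) = pi_K(1 /\ (alpha x + beta y)^3 delta^{-1}), expanded *)
Definition Phi_form (t n : K) (alpha beta delta : K * K) : {mpoly K[2]} :=
  let di := qinv t n delta in
  let m := qmul t n in
  let c p := qwedge (1, 0) (m p di) in
  bform (c (m alpha (m alpha alpha)))
        (3 * c (m alpha (m alpha beta)))
        (3 * c (m alpha (m beta beta)))
        (c (m beta (m beta beta))).

Definition Phi_is_orbit (aa : K -> Prop) (t n : K) (I : K * K -> Prop)
    (delta : K * K) (s : K) (f : {mpoly K[2]}) : Prop :=
  exists alpha beta : K * K,
    [/\ (forall p, I p <-> exists r a, [/\ R r, aa a &
             p = qadd (qscale r alpha) (qscale a beta)]),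
        qwedge alpha beta = s &
        exists g, in_SL aa g /\ Phi_form t n alpha beta delta = act g f].

End Defs.

From Pilot Require Import Defs.
From mathcomp Require Import all_boot all_order all_algebra.
From mathcomp Require Import mpoly ring.
Import GRing.Theory.
Set Implicit Arguments. Unset Strict Implicit. Unset Printing Implicit Defensive.
Local Open Scope ring_scope.

(* Write xi = x alpha + y beta.  Then C(x, y) is the [xi]-coordinate of
   xi^3 delta^-1, so C(x, y) = 0 means xi^3 = k delta for some k in K.  Since
   S (x) K is reduced (disc S != 0), k != 0 when xi != 0; taking norms,
   N(xi)^3 = k^2 N(delta) = k^2 s^3, so m := N(xi) / s satisfies m^3 = k^2,
   and delta = ((m / k) xi)^3.  Conversely, if delta = gamma^3, the
   coordinates of gamma in the basis (alpha, beta) are a zero of C.  Finally,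
   the existence of a nontrivial zero is invariant under an invertible linear
   change of variables. *)

Lemma lin2_neq0 (K : fieldType) (a b c e x y : K) : a * e - b * c != 0 ->
  x != 0 \/ y != 0 -> a * x + b * y != 0 \/ c * x + e * y != 0.
Proof.
move=> hdet hxy; case: (eqVneq (a * x + b * y) 0) => h1; last by left.
case: (eqVneq (c * x + e * y) 0) => h2; last by right.
have hx : x * (a * e - b * c) = e * (a * x + b * y) - b * (c * x + e * y) by ring.
have hy : y * (a * e - b * c) = a * (c * x + e * y) - c * (a * x + b * y) by ring.
rewrite h1 h2 !mulr0 subr0 in hx hy.
by exfalso; case: hxy => /eqP []; apply: (mulIf hdet); rewrite mul0r.
Qed.

Lemma lin2_solve (K : fieldType) (a b c e u v : K) : a * e - b * c != 0 ->
  exists x y, a * x + b * y = u /\ c * x + e * y = v.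
Proof.
move=> hdet; exists ((e * u - b * v) / (a * e - b * c)).
exists ((a * v - c * u) / (a * e - b * c)).
by split; field.
Qed.

Lemma det_mx2 (K : fieldType) (g : 'M[K]_2) :
  \det g = g 0 0 * g 1 1 - g 0 1 * g 1 0.
Proof.
rewrite (expand_det_row _ ord0) !big_ord_recl big_ord0 /cofactor !det_mx11 !mxE.
have -> : lift (lift ord0 ord0) (0 : 'I_1) = 0 by apply: val_inj.
have -> : lift ord0 (0 : 'I_1) = 1 by apply: val_inj.
by rewrite /=; ring.
Qed.

Section QuadraticAlgebra.
Variables (K : fieldType) (t n : K).

Local Notation qmul := (qmul t n).
Local Notation qnorm := (qnorm t n).
Local Notation qinv := (qinv t n).
Local Notation qcube := (qcube t n).

Definition qtrace (p : K * K) : K := 2 * p.1 + t * p.2.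

Lemma qmulC p q : qmul p q = qmul q p.
Proof. by rewrite /Defs.qmul /=; congr pair; ring. Qed.

Lemma qmulA p q r : qmul p (qmul q r) = qmul (qmul p q) r.
Proof. by rewrite /Defs.qmul /=; congr pair; ring. Qed.

Lemma qmulp1 p : qmul p (1, 0) = p.
Proof. by case: p => p1 p2; rewrite /Defs.qmul /=; congr pair; ring. Qed.

Lemma qmul_real k p : qmul (k, 0) p = qscale k p.
Proof. by rewrite /Defs.qmul /qscale /=; congr pair; ring. Qed.

Lemma qmulV p : qnorm p != 0 -> qmul p (qinv p) = (1, 0).
Proof.
case: p => p1 p2; rewrite /Defs.qinv /Defs.qnorm /Defs.qmul /qconj /= => hN.
by congr pair; field.
Qed.

Lemma qnormM p q : qnorm (qmul p q) = qnorm p * qnorm q.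
Proof. by rewrite /Defs.qnorm /Defs.qmul /=; ring. Qed.

Lemma qnorm_qcube p : qnorm (qcube p) = qnorm p ^+ 3.
Proof. by rewrite /Defs.qcube !qnormM; ring. Qed.

Lemma qnorm_qscale k p : qnorm (qscale k p) = k ^+ 2 * qnorm p.
Proof. by rewrite /Defs.qnorm /qscale /=; ring. Qed.

Lemma qcube_qscale k p : qcube (qscale k p) = qscale (k ^+ 3) (qcube p).
Proof. by rewrite /Defs.qcube /Defs.qmul /qscale /=; congr pair; ring. Qed.

(* Cayley-Hamilton: p^2 = T p - N, hence p^3 = (T^2 - N) p - T N. *)
Lemma qcubeE p : qcube p =
  ((qtrace p ^+ 2 - qnorm p) * p.1 - qtrace p * qnorm p,
   (qtrace p ^+ 2 - qnorm p) * p.2).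
Proof.
by rewrite /Defs.qcube /Defs.qmul /qtrace /Defs.qnorm /=; congr pair; ring.
Qed.

Lemma qtrace_disc p : qtrace p ^+ 2 - 4 * qnorm p = qdisc t n * p.2 ^+ 2.
Proof. by rewrite /qtrace /Defs.qnorm /qdisc; ring. Qed.

Lemma qcube_eq0 p : qdisc t n != 0 -> qcube p = (0, 0) -> p = (0, 0).
Proof.
move=> hdisc hp3.
have hN : qnorm p = 0.
  have : qnorm p ^+ 3 = 0 by rewrite -qnorm_qcube hp3 /Defs.qnorm /=; ring.
  by move/eqP; rewrite expf_eq0 => /eqP.
move: hp3; rewrite qcubeE hN subr0 mulr0 subr0.
case: p hN => [p1 p2] /= hN [h1 h2].
have [T0 | Tn0] := eqVneq (qtrace (p1, p2)) 0; last first.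
  have hT : qtrace (p1, p2) ^+ 2 != 0 by rewrite expf_neq0.
  by congr pair; apply: (mulfI hT); rewrite mulr0.
have hp2 : p2 = 0.
  have := qtrace_disc (p1, p2); rewrite T0 hN /= => /esym /eqP.
  rewrite mulr0 expr0n subr0 mulf_eq0 (negbTE hdisc) expf_eq0.
  by move=> /andP [_ /eqP].
move: hN; rewrite /Defs.qnorm /= hp2 !(mulr0, expr0n, addr0) /= => /eqP.
by rewrite expf_eq0 => /= /eqP ->.
Qed.

Lemma qmul_qinv_real p de : qnorm de != 0 -> (qmul p (qinv de)).2 = 0 ->
  p = qscale (qmul p (qinv de)).1 de.
Proof.
move=> hN h2; rewrite -qmul_real.
have -> : ((qmul p (qinv de)).1, 0) = qmul p (qinv de) by rewrite -h2; case: qmul.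
by rewrite -qmulA [qmul (qinv de) de]qmulC qmulV // qmulp1.
Qed.

(* m = N(xi) / s satisfies m^3 = k^2, so ((m / k) xi)^3 = delta. *)
Lemma qscale_qcube_is_qcube (s k : K) xi de :
  s != 0 -> s ^+ 3 = qnorm de -> k != 0 -> qcube xi = qscale k de ->
  de = qcube (qscale (qnorm xi / (s * k)) xi).
Proof.
move=> hs hs3 hk hxi.
have hN3 : qnorm xi ^+ 3 = k ^+ 2 * s ^+ 3.
  by rewrite -qnorm_qcube hxi qnorm_qscale hs3.
rewrite qcube_qscale hxi /qscale /= !mulrA.
have -> : (qnorm xi / (s * k)) ^+ 3 * k = 1.
  by rewrite exprMn hN3 exprVn; field; apply/andP.
by rewrite !mul1r; case: de {hs3 hxi}.
Qed.

Lemma qunit_qcube p : qunit t n (qcube p) -> qunit t n p.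
Proof. by rewrite /qunit qnorm_qcube expf_eq0. Qed.

End QuadraticAlgebra.

Section Forms.
Variable K : fieldType.

Definition ev2 (x y : K) (f : {mpoly K[2]}) : K :=
  meval (fun i : 'I_2 => if i == ord0 then x else y) f.

Lemma ev2_bform x y e0 e1 e2 e3 : ev2 x y (bform e0 e1 e2 e3) =
  e0 * x ^+ 3 + e1 * (x ^+ 2 * y) + e2 * (x * y ^+ 2) + e3 * y ^+ 3.
Proof.
rewrite /ev2 /bform !exprS !expr0 !mevalD !mevalZ !mevalM !meval1 !mevalXU /=.
by ring.
Qed.

Lemma ev2_act x y (g : 'M[K]_2) (f : {mpoly K[2]}) : ev2 x y (act g f) =
  (\det g)^-1 * ev2 (g 0 0 * x + g 1 0 * y) (g 0 1 * x + g 1 1 * y) f.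
Proof.
rewrite /ev2 /act mevalZ comp_mpoly_meval; congr (_ * _); apply: meval_eq => i.
rewrite (tnth_nth 0).
by case: i => [[|[|//]] ?] /=; rewrite mevalD !mevalZ !mevalXU.
Qed.

Lemma ev2_Phi_form (t n : K) al be de x y : ev2 x y (Phi_form t n al be de) =
  (qmul t n (qcube t n (qadd (qscale x al) (qscale y be))) (qinv t n de)).2.
Proof.
rewrite /Phi_form ev2_bform /qcube /qwedge.
case: (qinv t n de) => e1 e2; case: al => a1 a2; case: be => b1 b2.
by rewrite /qmul /qadd /qscale /=; ring.
Qed.

Lemma has_nontrivial_zero_act (g : 'M[K]_2) (f : {mpoly K[2]}) : \det g != 0 ->
  has_nontrivial_zero (act g f) <-> has_nontrivial_zero f.
Proof.
move=> hdet; have hdet2 : g 0 0 * g 1 1 - g 1 0 * g 0 1 != 0.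
  by rewrite [g 1 0 * _]mulrC -det_mx2.
split=> [[x [y [hxy hf]]] | [x0 [y0 [hxy hf]]]].
  move: hf; rewrite -[meval _ _]/(ev2 x y _) ev2_act => /eqP.
  rewrite mulf_eq0 invr_eq0 (negbTE hdet) /= => /eqP hf.
  exists (g 0 0 * x + g 1 0 * y), (g 0 1 * x + g 1 1 * y).
  by split; first exact: lin2_neq0.
have [x [y [hx hy]]] := lin2_solve x0 y0 hdet2.
exists x, y; split.
  case: (eqVneq x 0) => [x0E | ]; last by left.
  case: (eqVneq y 0) => [y0E | ]; last by right.
  by move: hx hy hxy; rewrite x0E y0E !mulr0 addr0 => <- <- [] /eqP.
by rewrite -[meval _ _]/(ev2 x y _) ev2_act hx hy /ev2 hf mulr0.
Qed.

Lemma has_nontrivial_zero_Phi_form (t n : K) al be de (s : K) :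
  qdisc t n != 0 -> qunit t n de -> qwedge al be != 0 ->
  s != 0 -> s ^+ 3 = qnorm t n de ->
  has_nontrivial_zero (Phi_form t n al be de) <->
  exists gamma, qunit t n gamma /\ de = qcube t n gamma.
Proof.
case: al => [a1 a2]; case: be => [b1 b2]; rewrite /qwedge /=.
move=> hdisc hde hw hs hs3.
have hw' : a1 * b2 - b1 * a2 != 0 by rewrite [b1 * _]mulrC.
split=> [[x [y [hxy hf]]] | [gamma [hgamma ->]]].
  move: hf; rewrite -[meval _ _]/(ev2 x y _) ev2_Phi_form.
  set xi := qadd _ _; set k := (qmul t n (qcube t n xi) (qinv t n de)).1 => hf.
  have hxi : qcube t n xi = qscale k de by apply: qmul_qinv_real.
  have hk : k != 0.
    apply/eqP => k0; move: hxi; rewrite k0 /qscale !mul0r.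
    move/(qcube_eq0 hdisc); rewrite /xi /qadd /qscale /= => -[u0 v0].
    have := lin2_neq0 hw' hxy.
    by rewrite (mulrC a1) (mulrC b1) (mulrC a2) (mulrC b2) u0 v0 eqxx; case.
  have hde3 := qscale_qcube_is_qcube hs hs3 hk hxi.
  exists (qscale (qnorm t n xi / (s * k)) xi); split=> //.
  by apply: qunit_qcube; rewrite -hde3.
case: gamma hgamma => g1 g2 hgamma.
have [x [y [hx hy]]] := lin2_solve g1 g2 hw'.
exists x, y; split.
  case: (eqVneq x 0) => [x0 | ]; last by left.
  case: (eqVneq y 0) => [y0 | ]; last by right.
  move: hgamma; rewrite /qunit -hx -hy x0 y0 !mulr0 addr0 /Defs.qnorm /=.
  by rewrite expr0n !mulr0 !addr0 eqxx.
rewrite -[meval _ _]/(ev2 x y _) ev2_Phi_form.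
have -> : qadd (qscale x (a1, a2)) (qscale y (b1, b2)) = (g1, g2).
  by rewrite /qadd /qscale /= -hx -hy; congr pair; ring.
by rewrite qmulV // qnorm_qcube expf_neq0.
Qed.

End Forms.

(* Only the nondegeneracy of S, the unit delta with N(delta) = s^3 and the basis
   (alpha, beta) of I matter. *)
Theorem mainTheorem7 (K : fieldType) (R : K -> Prop) (aa : K -> Prop)
    (a b c d : K) (t n : K) (I : K * K -> Prop) (delta : K * K) (s : K) :
  dedekind R -> (3 : K) != 0 -> frac_ideal R aa ->
  in_V R aa a b c d -> disc a b c d != 0 ->
  balanced R aa t n I delta s ->
  Phi_is_orbit R aa t n I delta s (cubic a b c d) ->
  (has_nontrivial_zero (cubic a b c d) <->
   exists gamma : K * K, qunit t n gamma /\ delta = qcube t n gamma).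
Proof.
move=> _ _ _ _ _ [[_ hdisc _ hdelta hs] [_ _ hs3]].
move=> [alpha [beta [_ hwedge [g [[_ _ _ _ hdet] hPhi]]]]].
have hdet_neq0 : \det g != 0 by rewrite hdet oner_neq0.
rewrite -(has_nontrivial_zero_act _ hdet_neq0) -hPhi.
by apply: (has_nontrivial_zero_Phi_form hdisc hdelta _ hs hs3); rewrite hwedge.
Qed.
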